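(* Let $p>3$ be a prime and $k\ge1$. Then there exists an automorphism $\phi$ of the restricted wreath product $\mathbb{Z}_p\,\mathrm{wr}\,\mathbb{Z}^k$ with finite Reidemeister number $R(\phi)$. In particular, $\mathbb{Z}_p\,\mathrm{wr}\,\mathbb{Z}^k$ does not have the property $R_\infty$.
   Context: For an automorphism $\phi$ of a group $G$, $R(\phi)$ is the number of classes of the relation $g\sim hg\phi(h^{-1})$, $h,g\in G$. A group has property $R_\infty$ if $R(\phi)=\infty$ for every automorphism. $\mathbb{Z}_p\,\mathrm{wr}\,\mathbb{Z}^k=\left(\bigoplus_{x\in\mathbb{Z}^k}A_x\right)\rtimes_\alpha\mathbb{Z}^k$, with $A_x\cong\mathbb{Z}_p$ generated by $\delta_x$, finitely supported direct sum, and $\alpha(y)(\delta_x)=\delta_{y+x}$. *)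

From mathcomp Require Import all_boot all_algebra.
From Stdlib Require Lists.List.
Set Implicit Arguments. Unset Strict Implicit. Unset Printing Implicit Defensive.
Import GRing.Theory.
Local Open Scope ring_scope.

(* Z_p wr Z^k = (finitely supported functions Z^k -> Z_p) ⋊ Z^k.  The generator delta_x of A_x corresponds to the
   indicator function of x.  alpha(y) delta_x = delta_(y+x), i.e.
   (alpha(y) g)(w) = g (w - y).  Product: (f,y)(g,z) = (f + alpha(y) g, y + z). *)

Definition wr_elt (p k : nat) := (('rV[int]_k -> 'Z_p) * 'rV[int]_k)%type.

Definition fin_supp (p k : nat) (f : 'rV[int]_k -> 'Z_p) : Prop :=
  exists s : seq 'rV[int]_k, forall x, x \notin s -> f x = 0.

Definition in_wr (p k : nat) (g : wr_elt p k) : Prop := fin_supp g.1.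

Definition wr_mul (p k : nat) (g h : wr_elt p k) : wr_elt p k :=
  (fun x => g.1 x + h.1 (x - g.2), g.2 + h.2).

Definition wr_inv (p k : nat) (g : wr_elt p k) : wr_elt p k :=
  (fun x => - g.1 (x + g.2), - g.2).

Definition wr_aut (p k : nat) (phi : wr_elt p k -> wr_elt p k) : Prop :=
  [/\ (forall g, in_wr g -> in_wr (phi g)),
      (forall g h, in_wr g -> in_wr h -> phi g = phi h -> g = h),
      (forall h, in_wr h -> exists g, in_wr g /\ phi g = h) &
      (forall g h, in_wr g -> in_wr h -> phi (wr_mul g h) = wr_mul (phi g) (phi h))].

Definition twisted_conj (p k : nat) (phi : wr_elt p k -> wr_elt p k)
  (g g' : wr_elt p k) : Prop :=
  exists h, in_wr h /\ g' = wr_mul (wr_mul h g) (phi (wr_inv h)).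

Definition reidemeister_finite (p k : nat) (phi : wr_elt p k -> wr_elt p k) : Prop :=
  exists s : seq (wr_elt p k),
    (forall r, Stdlib.Lists.List.In r s -> in_wr r) /\
    (forall g, in_wr g -> exists2 r, Stdlib.Lists.List.In r s & twisted_conj phi g r).

Definition has_R_infty (p k : nat) : Prop :=
  forall phi : wr_elt p k -> wr_elt p k, wr_aut phi -> ~ reidemeister_finite phi.

(* The automorphism phi (f, y) = (x |-> 2 f(-x), -y) has finitely many twisted
   conjugacy classes.  Twisting (f, y) by h = (a, u) replaces y by y + 2u, so y
   can be reduced coordinatewise mod 2, and the lamp part becomes
   a(x) - 2 a(w - x) + f(x - u) for w = y + 2u.  The map a |-> a - 2 a(w - .)
   is inverted by b |-> (1 - 4)^-1 (b + 2 b(w - .)), which needs 3 to be a unit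
   mod p; together with 2 being a unit this is where p > 3 is used.  Hence
   the 2^k elements (0, b), b in {0,1}^k, meet every class. *)

From mathcomp Require Import all_boot all_algebra.
From mathcomp Require Import ring zify.
From Stdlib Require Import FunctionalExtensionality.
Set Implicit Arguments. Unset Strict Implicit. Unset Printing Implicit Defensive.
Import GRing.Theory.
Local Open Scope ring_scope.

Lemma mem_In (T : eqType) (s : seq T) (x : T) : x \in s -> List.In x s.
Proof. by elim: s => //= y s IHs; rewrite in_cons => /orP[/eqP ->|/IHs]; [left|right]. Qed.

Lemma Zp_nat_unit (p m : nat) :
  prime p -> (0 < m < p)%N -> (m%:R : 'Z_p) \is a GRing.unit.
Proof.
move=> p_pr /andP[m_gt0 m_lt_p]; rewrite unitZpE ?prime_gt1 // prime_coprime //.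
by apply/negP => /(dvdn_leq m_gt0); rewrite leqNgt m_lt_p.
Qed.

Section FiniteSupport.
Variables (p k : nat).
Implicit Types f g : 'rV[int]_k -> 'Z_p.

Lemma fin_suppD f g : fin_supp f -> fin_supp g -> fin_supp (fun x => f x + g x).
Proof.
move=> [s f0] [t g0]; exists (s ++ t) => x.
by rewrite mem_cat negb_or => /andP[xs xt]; rewrite f0 // g0 // addr0.
Qed.

Lemma fin_suppMl (c : 'Z_p) f : fin_supp f -> fin_supp (fun x => c * f x).
Proof. by move=> [s f0]; exists s => x /f0 ->; rewrite mulr0. Qed.

Lemma fin_supp_comp (sigma tau : 'rV[int]_k -> 'rV[int]_k) f :
  cancel sigma tau -> fin_supp f -> fin_supp (fun x => f (sigma x)).
Proof.
move=> sigmaK [s f0]; exists (map tau s) => x xs; apply: f0; apply: contra xs => sx.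
by rewrite -[x]sigmaK map_f.
Qed.

End FiniteSupport.

Section Twist.
Variables (p k : nat) (c : 'Z_p).

Definition wr_twist (g : wr_elt p k) : wr_elt p k := (fun x => c * g.1 (- x), - g.2).

Lemma wr_twist_aut : c \is a GRing.unit -> wr_aut wr_twist.
Proof.
move=> c_unit; split.
- by move=> [f y] /= f_fin; apply/fin_suppMl/(fin_supp_comp opprK).
- move=> [f y] [g z] _ _ [Efg /oppr_inj <-]; congr pair.
  apply: functional_extensionality => x.
  by have /= := congr1 (fun F => F (- x)) Efg; rewrite opprK => /(mulrI c_unit).
- move=> [f y] /= f_fin; exists (fun x => c^-1 * f (- x), - y); split.
    exact/fin_suppMl/(fin_supp_comp opprK).
  rewrite /wr_twist /= opprK; congr pair; apply: functional_extensionality => x.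
  by rewrite opprK mulVKr.
- move=> [f y] [g z] _ _; rewrite /wr_twist /wr_mul /=; congr pair; last exact: opprD.
  by apply: functional_extensionality => x; rewrite mulrDr opprD opprK.
Qed.

Lemma wr_twist_conj_lamps_zero (f : 'rV[int]_k -> 'Z_p) (y u : 'rV[int]_k) :
  c * c - 1 \is a GRing.unit -> fin_supp f ->
  twisted_conj wr_twist (f, y) ((fun _ => 0), y + u *+ 2).
Proof.
move=> c2_unit f_fin; set w := y + u *+ 2.
pose d := (c * c - 1)^-1.
pose F x := f (x - u).
pose a x := d * (F x + c * F (w - x)).
have F_fin : fin_supp F by apply: (fin_supp_comp (subrK u)).
exists (a, u); split.
  by apply/fin_suppMl/fin_suppD/fin_suppMl/(fin_supp_comp (subKr w)).
rewrite /wr_mul /wr_inv /wr_twist /=; congr pair; last first.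
  by rewrite opprK /w mulr2n addrAC addrC.
apply: functional_extensionality => x.
have -> : - (x - (u + y)) + u = w - x.
  by rewrite opprB addrAC /w mulr2n [u + y + u]addrAC [u + u + y]addrC.
rewrite /a subKr -/(F x); move: (F x) (F (w - x)) => Fx Fwx.
have dK : d * (c * c - 1) = 1 by apply: mulVr.
by transitivity (Fx * (1 - d * (c * c - 1))); [rewrite dK subrr mulr0 | ring].
Qed.

End Twist.

Section Parity.
Variable k : nat.

Definition bits_row (b : 'M[bool]_(1, k)) : 'rV[int]_k :=
  map_mx (fun b : bool => (b : nat)%:Z) b.

Definition row_mod2 (y : 'rV[int]_k) : 'M[bool]_(1, k) :=
  \row_j ((y ord0 j %% 2)%Z == 1).

Lemma bits_row_mod2E (y : 'rV[int]_k) :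
  bits_row (row_mod2 y) = y - (\row_j (y ord0 j %/ 2)%Z) *+ 2.
Proof.
apply/matrixP => i j; have -> : i = ord0 by apply: ord1.
rewrite !mxE.
have := divz_eq (y ord0 j) 2; have := modz_ge0 (y ord0 j) (isT : 2 != 0 :> int).
have := ltz_pmod (y ord0 j) (isT : 0 < 2 :> int).
by case: eqP => /=; lia.
Qed.

End Parity.

Definition twist_reps (p k : nat) : seq (wr_elt p k) :=
  [seq ((fun _ => 0), bits_row b) | b <- enum 'M[bool]_(1, k)].

Lemma wr_twist_reidemeister_finite (p k : nat) (c : 'Z_p) :
  c * c - 1 \is a GRing.unit -> reidemeister_finite (@wr_twist p k c).
Proof.
move=> c2_unit; exists (twist_reps p k); split.
  by move=> r /List.in_map_iff[b [<- _]]; exists [::].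
move=> [f y] f_fin; exists ((fun _ => 0), bits_row (row_mod2 y)).
  exact/List.in_map/mem_In/mem_enum.
by rewrite bits_row_mod2E -mulNrn; apply: wr_twist_conj_lamps_zero.
Qed.

Theorem theorem3p5 (p k : nat) (hp : prime p) (hp3 : (3 < p)%N) (hk : (1 <= k)%N) :
  (exists phi : wr_elt p k -> wr_elt p k, wr_aut phi /\ reidemeister_finite phi)
  /\ ~ has_R_infty p k.
Proof.
pose c : 'Z_p := 2%:R.
have c_unit : c \is a GRing.unit by apply: Zp_nat_unit => //; lia.
have c2_unit : c * c - 1 \is a GRing.unit.
  have -> : c * c - 1 = 3%:R by rewrite /c; ring.
  by apply: Zp_nat_unit => //; lia.
have twist_fin : exists phi : wr_elt p k -> wr_elt p k, wr_aut phi /\ reidemeister_finite phi.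
  exists (@wr_twist p k c); split; first exact: wr_twist_aut.
  exact: wr_twist_reidemeister_finite.
split=> // R_infty; case: twist_fin => phi [phi_aut phi_fin].
exact: R_infty phi phi_aut phi_fin.
Qed.
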